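(* The inquisitive disjunction $\vee$ is strongly undefinable in propositional dependence logic $\mathcal D$. Concretely: for every context $\varphi(a,b)$ of $\mathcal D$ and every pair of distinct propositional letters $p,q$ not occurring in $\varphi(a,b)$, letting $M_{pq}$ be the model with worlds $w_1,w_2,w_3$ in which $p$ is true exactly at $w_1,w_2$, $q$ is true exactly at $w_2,w_3$, and all other letters are false everywhere, we have $\varphi(=\!(p),=\!(q))\not\equiv_{M_{pq}}=\!(p)\vee=\!(q)$; in particular $\varphi(=\!(p),=\!(q))\not\equiv=\!(p)\vee=\!(q)$.
   Context: Formulas of $\mathcal D$: $\varphi::= p\mid\neg p\mid\bot\mid=\!(p_1,\dots,p_n;q)\mid\varphi\land\varphi\mid\varphi\otimes\varphi$ with $p,q,p_i$ propositional letters ($n\ge0$; for $n=0$ written $=\!(q)$). A context $\varphi(a,b)$ is a $\mathcal D$ formula in which the letters $a,b$ do not occur negated nor inside a dependence atom; $\varphi(\psi,\chi)$ replaces $a$ by $\psi$ and $b$ by $\chi$. A model is $M=(W,V)$, $V(w)$ the set of letters true at $w$. Support at $s\subseteq W$: $s\models p$ iff $p$ true at all $w\in s$; $s\models\neg p$ iff $p$ false at all $w\in s$; $s\models\bot$ iff $s=\emptyset$; $s\models\psi\land\chi$ iff both; $s\models\psi\otimes\chi$ iff $s=t_1\cup t_2$ with $t_1\models\psi$, $t_2\models\chi$; $s\models=\!(p_1,\dots,p_n;q)$ iff any two worlds of $s$ agreeing on all $p_i$ agree on $q$; $s\models\psi\vee\chi$ iff $s\models\psi$ or $s\models\chi$ (inquisitive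 disjunction, not in $\mathcal D$). $\psi\equiv_M\chi$: same supporting states in $M$; $\psi\equiv\chi$: $\psi\equiv_M\chi$ for all $M$. Strong undefinability of a binary connective $\circ$ means: there are formulas $\psi,\chi$ and a model $M$ such that for every template (here: context) $\varphi(a,b)$, $\varphi(\psi',\chi')\not\equiv_{M'}\psi'\circ\chi'$, where $\psi',\chi'$ differ from $\psi,\chi$ only by a renaming of atoms and $M'$ is isomorphic to $M$. *)

From Stdlib Require Import List Arith Bool.
Import ListNotations.

Definition letter := nat.

Inductive form : Type :=
| Atom   : letter -> form
| NAtom  : letter -> form
| Bot    : form
| Dep    : list letter -> letter -> form
| And    : form -> form -> form
| Tensor : form -> form -> form.

Definition Const (q : letter) : form := Dep [] q.

Record model := Model { world : Type; val : world -> letter -> bool }.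

Definition state (M : model) := world M -> Prop.

Fixpoint supp (M : model) (s : state M) (f : form) : Prop :=
  match f with
  | Atom p => forall w, s w -> val M w p = true
  | NAtom p => forall w, s w -> val M w p = false
  | Bot => forall w, ~ s w
  | Dep ps q => forall w w', s w -> s w' ->
        (forall r, In r ps -> val M w r = val M w' r) -> val M w q = val M w' q
  | And f g => supp M s f /\ supp M s g
  | Tensor f g => exists t1 t2 : state M,
        (forall w, s w <-> (t1 w \/ t2 w)) /\ supp M t1 f /\ supp M t2 g
  end.

(* support of the inquisitive disjunction f \vee g (not a formula of D) *)
Definition supp_ivee (M : model) (s : state M) (f g : form) : Prop :=
  supp M s f \/ supp M s g.

Definition equiv_ivee_in (M : model) (f g h : form) : Prop :=
  forall s : state M, supp M s f <-> supp_ivee M s g h.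

Definition equiv_ivee (f g h : form) : Prop :=
  forall M : model, equiv_ivee_in M f g h.

Fixpoint occurs (r : letter) (f : form) : Prop :=
  match f with
  | Atom p => p = r
  | NAtom p => p = r
  | Bot => False
  | Dep ps q => In r ps \/ q = r
  | And f g => occurs r f \/ occurs r g
  | Tensor f g => occurs r f \/ occurs r g
  end.

Fixpoint occurs_bad (r : letter) (f : form) : Prop :=
  match f with
  | Atom _ => False
  | NAtom p => p = r
  | Bot => False
  | Dep ps q => In r ps \/ q = r
  | And f g => occurs_bad r f \/ occurs_bad r g
  | Tensor f g => occurs_bad r f \/ occurs_bad r g
  end.

Definition is_context (phi : form) (a b : letter) : Prop :=
  a <> b /\ ~ occurs_bad a phi /\ ~ occurs_bad b phi.

Fixpoint subst2 (phi : form) (a b : letter) (psi chi : form) : form :=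
  match phi with
  | Atom r => if Nat.eqb r a then psi else if Nat.eqb r b then chi else Atom r
  | NAtom r => NAtom r
  | Bot => Bot
  | Dep ps q => Dep ps q
  | And f g => And (subst2 f a b psi chi) (subst2 g a b psi chi)
  | Tensor f g => Tensor (subst2 f a b psi chi) (subst2 g a b psi chi)
  end.

Inductive W3 : Type := w1 | w2 | w3.

Definition val_pq (p q : letter) (w : W3) (r : letter) : bool :=
  (Nat.eqb r p && match w with w1 | w2 => true | w3 => false end)
  || (Nat.eqb r q && match w with w2 | w3 => true | w1 => false end).

Definition M_pq (p q : letter) : model := Model W3 (val_pq p q).

From Stdlib Require Import PeanoNat Classical.

(* In M_pq the disjunction =(p) \/ =(q) is supported by {w1,w2} and by {w2,w3}
   but not by {w1,w3}.  An instance phi(=(p),=(q)) with p, q fresh cannot tell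
   these teams apart: if it is supported by {w1,w2} and by {w2,w3}, then also
   by {w1,w3}.  This goes by induction on phi; the only real case is the
   tensor.  If both of its components are used nonemptily, then each is
   supported by every singleton (a second invariant, also by induction) and
   {w1,w3} = {w1} u {w3}; otherwise one component alone supports both teams
   and the induction hypothesis applies to it. *)

Lemma supp_ext (M : model) (f : form) (s s' : state M) :
  (forall w, s w <-> s' w) -> supp M s f -> supp M s' f.
Proof.
  revert s s'; induction f; simpl; intros s s' E H.
  - intros w Hw; apply H, E, Hw.
  - intros w Hw; apply H, E, Hw.
  - intros w Hw; apply (H w), E, Hw.
  - intros w w' Hw Hw'; apply H; apply E; assumption.
  - destruct H; split; [apply (IHf1 s) | apply (IHf2 s)]; assumption.
  - destruct H as [t1 [t2 [Et [H1 H2]]]]; exists t1, t2; split; [|split; assumption].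
    intro w; rewrite <- E; apply Et.
Qed.

Lemma supp_empty (M : model) (f : form) : supp M (fun _ => False) f.
Proof.
  induction f; simpl; try tauto.
  exists (fun _ => False), (fun _ => False); tauto.
Qed.

Lemma supp_union_empty_l (M : model) (f : form) (s t1 t2 : state M) :
  (forall w, s w <-> t1 w \/ t2 w) -> (forall w, ~ t1 w) -> supp M t2 f -> supp M s f.
Proof. intros E N; apply supp_ext; intro w; rewrite E; firstorder. Qed.

Lemma supp_union_empty_r (M : model) (f : form) (s t1 t2 : state M) :
  (forall w, s w <-> t1 w \/ t2 w) -> (forall w, ~ t2 w) -> supp M t1 f -> supp M s f.
Proof. intros E N; apply supp_ext; intro w; rewrite E; firstorder. Qed.

Lemma supp_Dep_singleton (M : model) (ps : list letter) (r : letter) (v : world M) :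
  supp M (eq v) (Dep ps r).
Proof. intros w w' <- <- _; reflexivity. Qed.

Lemma Const_not_supp (M : model) (s : state M) (r : letter) (w w' : world M) :
  s w -> s w' -> val M w r <> val M w' r -> ~ supp M s (Const r).
Proof. intros Hw Hw' Hne H; apply Hne, H; simpl; tauto. Qed.

Definition all_but (w : W3) : W3 -> Prop := fun v => v <> w.

Section TwoLetterModel.

Variables p q : letter.
Hypothesis p_neq_q : p <> q.

Local Notation M := (M_pq p q).

Lemma val_pq_fresh (w : W3) (r : letter) : r <> p -> r <> q -> val_pq p q w r = false.
Proof.
  intros Hp Hq; unfold val_pq.
  rewrite (proj2 (Nat.eqb_neq r p) Hp), (proj2 (Nat.eqb_neq r q) Hq).
  reflexivity.
Qed.

Lemma val_pq_p (w : W3) : val_pq p q w p = match w with w3 => false | _ => true end.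
Proof.
  unfold val_pq; rewrite Nat.eqb_refl, (proj2 (Nat.eqb_neq p q) p_neq_q).
  destruct w; reflexivity.
Qed.

Lemma val_pq_q (w : W3) : val_pq p q w q = match w with w1 => false | _ => true end.
Proof.
  unfold val_pq; rewrite Nat.eqb_refl, (proj2 (Nat.eqb_neq q p) (not_eq_sym p_neq_q)).
  destruct w; reflexivity.
Qed.

Lemma supp_Const_p_all_but_w3 : supp M (all_but w3) (Const p).
Proof.
  intros w w' Hw Hw' _; simpl; rewrite !val_pq_p.
  destruct w, w'; try reflexivity; congruence.
Qed.

Lemma supp_Const_q_all_but_w1 : supp M (all_but w1) (Const q).
Proof.
  intros w w' Hw Hw' _; simpl; rewrite !val_pq_q.
  destruct w, w'; try reflexivity; congruence.
Qed.

Lemma not_supp_Const_p_all_but_w1 : ~ supp M (all_but w1) (Const p).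
Proof.
  apply (Const_not_supp M _ _ w2 w3); try discriminate.
  simpl; rewrite !val_pq_p; discriminate.
Qed.

Lemma not_supp_Const_q_all_but_w3 : ~ supp M (all_but w3) (Const q).
Proof.
  apply (Const_not_supp M _ _ w1 w2); try discriminate.
  simpl; rewrite !val_pq_q; discriminate.
Qed.

Lemma not_supp_Const_p_all_but_w2 : ~ supp M (all_but w2) (Const p).
Proof.
  apply (Const_not_supp M _ _ w1 w3); try discriminate.
  simpl; rewrite !val_pq_p; discriminate.
Qed.

Lemma not_supp_Const_q_all_but_w2 : ~ supp M (all_but w2) (Const q).
Proof.
  apply (Const_not_supp M _ _ w1 w3); try discriminate.
  simpl; rewrite !val_pq_q; discriminate.
Qed.

Variables a b : letter.

Local Notation inst phi := (subst2 phi a b (Const p) (Const q)).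

Lemma inst_supp_singletons (phi : form) :
  ~ occurs p phi -> ~ occurs q phi ->
  forall (s : state M) (w : W3), s w -> supp M s (inst phi) ->
  forall v : W3, supp M (eq v) (inst phi).
Proof.
  induction phi as [r|r| |ps r|phi1 IH1 phi2 IH2|phi1 IH1 phi2 IH2];
    simpl; intros Hp Hq s w Hw H v;
    try (apply not_or_and in Hp as [Hp1 Hp2]; apply not_or_and in Hq as [Hq1 Hq2]).
  - destruct (r =? a); [|destruct (r =? b)]; try apply supp_Dep_singleton.
    exfalso; specialize (H w Hw); simpl in H.
    rewrite val_pq_fresh in H by (intros ->; auto); discriminate.
  - intros u _; apply val_pq_fresh; intros ->; auto.
  - exfalso; exact (H w Hw).
  - exact (supp_Dep_singleton M ps r v).
  - destruct H as [H1 H2]; split; [apply (IH1 Hp1 Hq1 s w) | apply (IH2 Hp2 Hq2 s w)];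
      assumption.
  - destruct H as [t1 [t2 [E [T1 T2]]]].
    destruct (proj1 (E w) Hw) as [Hw1|Hw2].
    + exists (eq v), (fun _ => False); split; [tauto|].
      split; [apply (IH1 Hp1 Hq1 t1 w) | apply supp_empty]; assumption.
    + exists (fun _ => False), (eq v); split; [tauto|].
      split; [apply supp_empty | apply (IH2 Hp2 Hq2 t2 w)]; assumption.
Qed.

Lemma inst_supp_all_but_w2 (phi : form) :
  ~ occurs p phi -> ~ occurs q phi ->
  supp M (all_but w3) (inst phi) -> supp M (all_but w1) (inst phi) ->
  supp M (all_but w2) (inst phi).
Proof.
  induction phi as [r|r| |ps r|phi1 IH1 phi2 IH2|phi1 IH1 phi2 IH2];
    simpl; intros Hp Hq H3 H1;
    try (apply not_or_and in Hp as [Hp1 Hp2]; apply not_or_and in Hq as [Hq1 Hq2]).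
  - destruct (r =? a); [|destruct (r =? b)].
    + exfalso; exact (not_supp_Const_p_all_but_w1 H1).
    + exfalso; exact (not_supp_Const_q_all_but_w3 H3).
    + exfalso; specialize (H3 w1 ltac:(discriminate)); simpl in H3.
      rewrite val_pq_fresh in H3 by (intros ->; auto); discriminate.
  - intros u _; apply val_pq_fresh; intros ->; auto.
  - exfalso; exact (H3 w1 ltac:(discriminate)).
  - intros u u' _ _ _; simpl; rewrite !val_pq_fresh; auto; intros ->; auto.
  - destruct H3, H1; split; [apply IH1 | apply IH2]; assumption.
  - destruct H3 as [t1 [t2 [Et [T1 T2]]]], H1 as [u1 [u2 [Eu [U1 U2]]]].
    destruct (classic (exists w, t1 w \/ u1 w)) as [[w N1]|N1];
      [destruct (classic (exists w', t2 w' \/ u2 w')) as [[w' N2]|N2]|].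
    + exists (eq w1), (eq w3); split.
      { intro v; unfold all_but; destruct v; intuition discriminate. }
      split.
      * destruct N1; [apply (inst_supp_singletons phi1 Hp1 Hq1 t1 w) |
                      apply (inst_supp_singletons phi1 Hp1 Hq1 u1 w)]; assumption.
      * destruct N2; [apply (inst_supp_singletons phi2 Hp2 Hq2 t2 w') |
                      apply (inst_supp_singletons phi2 Hp2 Hq2 u2 w')]; assumption.
    + exists (all_but w2), (fun _ => False); split; [tauto|split; [|apply supp_empty]].
      apply IH1; try assumption.
      * apply (supp_union_empty_r _ _ _ t1 t2 Et); firstorder.
      * apply (supp_union_empty_r _ _ _ u1 u2 Eu); firstorder.
    + exists (fun _ => False), (all_but w2); split; [tauto|split; [apply supp_empty|]].
      apply IH2; try assumption.
      * apply (supp_union_empty_l _ _ _ t1 t2 Et); firstorder.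
      * apply (supp_union_empty_l _ _ _ u1 u2 Eu); firstorder.
Qed.

Lemma inst_not_equiv_ivee_in (phi : form) :
  ~ occurs p phi -> ~ occurs q phi -> ~ equiv_ivee_in M (inst phi) (Const p) (Const q).
Proof.
  intros Hp Hq E.
  assert (H2 : supp M (all_but w2) (inst phi)).
  { apply inst_supp_all_but_w2; try assumption; apply E.
    - left; exact supp_Const_p_all_but_w3.
    - right; exact supp_Const_q_all_but_w1. }
  destruct (proj1 (E _) H2).
  - exact (not_supp_Const_p_all_but_w2 H).
  - exact (not_supp_Const_q_all_but_w2 H).
Qed.

End TwoLetterModel.

Theorem theorem6 :
  forall (phi : form) (a b p q : letter),
    is_context phi a b ->
    p <> q ->
    ~ occurs p phi -> ~ occurs q phi ->
    ~ equiv_ivee_in (M_pq p q) (subst2 phi a b (Const p) (Const q)) (Const p) (Const q)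
    /\ ~ equiv_ivee (subst2 phi a b (Const p) (Const q)) (Const p) (Const q).
Proof.
  (* Letters other than p and q are false everywhere in M_pq. *)
  intros phi a b p q _ Hpq Hp Hq.
  assert (H := inst_not_equiv_ivee_in p q Hpq a b phi Hp Hq).
  split; [exact H | intro E; exact (H (E (M_pq p q)))].
Qed.
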